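(* For integers $k$ and $t$ with $k \geq 2$ and $0 \leq t \leq k$, $$gr_k(K_3 : tP_5, (k-t)P_3) \leq t+4,$$ i.e., for every $n \geq t+4$, every coloring of the edges of $K_n$ with colors from $\{1,\dots,k\}$ contains either a rainbow triangle, or a monochromatic path $P_5$ in some color $j \in \{1,\dots,t\}$, or a monochromatic path $P_3$ in some color $j \in \{t+1,\dots,k\}$.
   Context: $P_m$ denotes the path on $m$ vertices. A rainbow triangle is a triangle whose three edges have three distinct colors. For graphs $G, H_1,\dots,H_k$, $gr_k(G : H_1,\dots,H_k)$ is the minimum integer $N$ such that for every $n \geq N$, every coloring of the edges of $K_n$ using colors $1,\dots,k$ contains either a rainbow copy of $G$ or, for some $i$, a copy of $H_i$ all of whose edges have color $i$. The notation $gr_k(G : tH, (k-t)K)$ means $gr_k(G : H,\dots,H,K,\dots,K)$ with $H$ appearing $t$ times (colors $1,\dots,t$) and $K$ appearing $k-t$ times (colors $t+1,\dots,k$). *)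

From mathcomp Require Import all_boot.
Set Implicit Arguments. Unset Strict Implicit. Unset Printing Implicit Defensive.

(* An edge-colouring of K_n with k colours: vertices 'I_n, colours 'I_k
   (colour index i stands for colour i+1 of the paper).  Only the values
   on pairs of distinct vertices matter; c must be symmetric. *)
Definition edge_coloring n k (c : 'I_n -> 'I_n -> 'I_k) : Prop :=
  forall x y : 'I_n, c x y = c y x.

Definition has_rainbow_triangle n k (c : 'I_n -> 'I_n -> 'I_k) : Prop :=
  exists x y z : 'I_n,
    [/\ x != y, y != z, x != z &
     [/\ c x y != c y z, c y z != c x z & c x y != c x z]].

(* a copy of the path P_m (m vertices) all of whose edges have colour j:
   an injective sequence of m vertices with consecutive pairs coloured j *)
Definition has_mono_path n k (c : 'I_n -> 'I_n -> 'I_k) (m : nat) (j : 'I_k) : Prop :=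
  exists v : 'I_m -> 'I_n,
    injective v /\
    forall i1 i2 : 'I_m, val i2 = (val i1).+1 -> c (v i1) (v i2) = j.

From mathcomp Require Import all_boot zify.
From Stdlib Require Import Classical.

(* Let S be the colours in which a monochromatic P5 is forbidden; the other
   colours may not even contain a monochromatic P3.  A rainbow-triangle-free
   colouring of a vertex set W with these properties has |W| <= |S| + 3; we
   argue on a counterexample minimising |W| + |S|.
   - If an edge uw has a colour outside S, every other vertex x sees u and w in
     one colour, which lies in S and is seen from at most two such x.  Deleting
     u, w and the colours seen twice leaves a smaller instance; counting the
     deleted colours against the deleted vertices gives the bound.
   - Otherwise take a monochromatic P3 of colour j and the j-component K of its
     centre.  Without rainbow triangles every vertex outside K sees K in a single
     colour.  If K is proper, these colours are distinct and lie in S, and K with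
     the remaining colours is a smaller instance.  If K is everything, the
     j-graph is connected on at least five vertices and contains no P5: a
     dominating vertex can be deleted together with j, a vertex of degree at
     least 3 produces a monochromatic P5 in another colour, and a connected graph
     of maximum degree 2 on at least five vertices contains a P5. *)

Set Implicit Arguments. Unset Strict Implicit. Unset Printing Implicit Defensive.

Lemma exists_fresh (T : finType) (A : {set T}) (s : seq T) :
  size s < #|A| -> exists2 x, x \in A & x \notin s.
Proof.
move=> ltsA; apply/subsetPn; apply: contraTN ltsA => /subset_leq_card leAs.
by rewrite -leqNgt (leq_trans leAs (card_size s)).
Qed.

Lemma connect_exit (T : finType) (e : rel T) (A : {pred T}) x y :
  connect e x y -> x \in A -> y \notin A ->
  exists z z', [/\ z \in A, z' \notin A & e z z'].
Proof.
case/connectP=> p + ->; elim: p x => [|z p IHp] x /=; first by move=> _ ->.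
case/andP=> exz pz xA yA; have [zA|zA] := boolP (z \in A); first exact: IHp zA yA.
by exists x, z.
Qed.

Ltac contra_neq :=
  match goal with
  | H : is_true (?x != ?x) |- _ => by rewrite eqxx in H
  | H : is_true (~~ ?b), H' : is_true ?b |- _ => by rewrite H' in H
  end.
Ltac solve_uniq :=
  rewrite /= ?inE ?negb_or ?andbT; repeat (apply/andP; split);
  try (apply/eqP => ?; subst; contra_neq).

Section Colouring.
Variables (n k : nat) (c : 'I_n -> 'I_n -> 'I_k).

Lemma has_mono_path_seq (s : seq 'I_n) x0 j :
  uniq s -> (forall i, i.+1 < size s -> c (nth x0 s i) (nth x0 s i.+1) = j) ->
  has_mono_path c (size s) j.
Proof.
move=> s_uniq s_mono; exists (fun i : 'I_(size s) => nth x0 s i); split.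
  by move=> i1 i2 /eqP; rewrite nth_uniq // => /eqP /val_inj.
by move=> i1 i2 e; rewrite /= e s_mono // -e ltn_ord.
Qed.

Definition rainbow_free (W : {set 'I_n}) :=
  forall x y z, x \in W -> y \in W -> z \in W -> x != y -> y != z -> x != z ->
  [|| c x y == c y z, c y z == c x z | c x y == c x z].

Definition no_mono_P5 (W : {set 'I_n}) (S : {set 'I_k}) :=
  forall p1 p2 p3 p4 p5 j,
  p1 \in W -> p2 \in W -> p3 \in W -> p4 \in W -> p5 \in W ->
  uniq [:: p1; p2; p3; p4; p5] -> j \in S ->
  c p1 p2 = j -> c p2 p3 = j -> c p3 p4 = j -> c p4 p5 = j -> False.

Definition mono_P3_colours_in (W : {set 'I_n}) (S : {set 'I_k}) :=
  forall a b d, a \in W -> b \in W -> d \in W -> a != b -> b != d -> a != d ->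
  c a b = c b d -> c a b \in S.

Definition module (W M : {set 'I_n}) :=
  forall y x1 x2, y \in W -> y \notin M -> x1 \in M -> x2 \in M -> c y x1 = c y x2.

Definition mono_edge (W : {set 'I_n}) (j : 'I_k) : rel 'I_n :=
  [rel x y | [&& x \in W, y \in W, x != y & c x y == j]].

Hypothesis hc : edge_coloring c.

Lemma rainbow_free_sub (W W' : {set 'I_n}) :
  W' \subset W -> rainbow_free W -> rainbow_free W'.
Proof. by move=> /subsetP sW'W hR x y z /sW'W xW /sW'W yW /sW'W zW; apply: hR. Qed.

Lemma no_mono_P5_sub (W W' : {set 'I_n}) (S S' : {set 'I_k}) :
  W' \subset W -> S' \subset S -> no_mono_P5 W S -> no_mono_P5 W' S'.
Proof.
move=> /subsetP sW'W /subsetP sS'S h5 p1 p2 p3 p4 p5 j /sW'W ? /sW'W ? /sW'W ?.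
by move=> /sW'W ? /sW'W ? ? /sS'S; apply: h5.
Qed.

Lemma rainbow_free_eq (W : {set 'I_n}) x y z : rainbow_free W ->
  x \in W -> y \in W -> z \in W -> x != y -> y != z -> x != z ->
  c x y != c x z -> c x y != c y z -> c x z = c y z.
Proof.
move=> hR xW yW zW xy yz xz /negbTE cxz /negbTE cyz.
by have := hR x y z xW yW zW xy yz xz; rewrite cxz cyz orbF => /eqP.
Qed.

Lemma mono_edgeP (W : {set 'I_n}) j x y :
  reflect [/\ x \in W, y \in W, x != y & c x y = j] (mono_edge W j x y).
Proof. by apply: (iffP and4P) => -[-> -> -> /eqP]. Qed.

Lemma mono_edge_sym (W : {set 'I_n}) j : symmetric (mono_edge W j).
Proof. by move=> x y; rewrite /mono_edge /= hc eq_sym andbCA. Qed.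

Lemma connect_mono_edge_in (W : {set 'I_n}) j b x :
  b \in W -> connect (mono_edge W j) b x -> x \in W.
Proof.
move=> bW /connectP [p + ->]; elim: p b bW => [|z p IHp] b //= _.
by case/andP=> /mono_edgeP [_ zW _ _]; apply: IHp.
Qed.

Lemma component_module (W : {set 'I_n}) j b : rainbow_free W -> b \in W ->
  module W [set x | connect (mono_edge W j) b x].
Proof.
move=> hR bW y x1 x2 yW; rewrite !inE => byN.
suff const x : connect (mono_edge W j) b x -> c y x = c y b.
  by move=> /const -> /const ->.
case/connectP=> p + ->; elim/last_ind: p => [|p z IHp] //=.
rewrite rcons_path last_rcons => /andP [pp]; rewrite -(IHp pp); set v := last b p => evz.
have bv : connect (mono_edge W j) b v by apply/connectP; exists p.
have bz : connect (mono_edge W j) b z := connect_trans bv (connect1 evz).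
have not_mono a : connect (mono_edge W j) b a -> a \in W -> a != y /\ c a y != j.
  move=> ba aW; have ay : a != y by apply/eqP => ay; rewrite -ay ba in byN.
  split=> //; apply/eqP => cay; move/negP: byN; apply.
  by apply: connect_trans ba (connect1 _); apply/mono_edgeP.
case/mono_edgeP: evz => vW zW vz cvz.
have [vy cvy] := not_mono v bv vW; have [zy czy] := not_mono z bz zW.
by rewrite hc (hc y v); apply/esym/(rainbow_free_eq hR) => //; rewrite cvz eq_sym.
Qed.

Section MinimalCounterexample.
Local Unset Implicit Arguments.
Variables (W : {set 'I_n}) (S : {set 'I_k}).
Hypotheses (hR : rainbow_free W) (h5 : no_mono_P5 W S) (h3 : mono_P3_colours_in W S).
Hypothesis W_big : #|S| + 4 <= #|W|.
Hypothesis W_min : forall (W' : {set 'I_n}) (S' : {set 'I_k}),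
  W' \subset W -> S' \subset S -> #|W'| + #|S'| < #|W| + #|S| ->
  mono_P3_colours_in W' S' -> #|W'| <= #|S'| + 3.
Local Set Implicit Arguments.

Section MatchingEdge.
Variables u w : 'I_n.
Hypotheses (uW : u \in W) (wW : w \in W) (uw : u != w) (cuw : c u w \notin S).

Let rest := W :\: [set u; w].
Let class j := [set x in rest | c u x == j].
Let pairs := [set j in S | #|class j| == 2].

Lemma in_rest x : (x \in rest) = [&& x != u, x != w & x \in W].
Proof. by rewrite !inE negb_or andbA. Qed.

Lemma matching_edge_twin x : x \in rest -> c u x = c w x.
Proof.
rewrite in_rest => /and3P [xu xw xW].
have cux : c u w != c u x.
  apply: contraNneq cuw => cuwx; rewrite cuwx hc.
  by apply: (h3 x u w); rewrite // hc cuwx.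
have cwx : c u w != c w x.
  apply: contraNneq cuw => cuwx; rewrite cuwx hc.
  by apply: (h3 x w u); rewrite // 1?eq_sym // hc -cuwx hc.
by apply: (rainbow_free_eq hR); rewrite // eq_sym.
Qed.

Lemma matching_edge_colour_in x : x \in rest -> c u x \in S.
Proof.
move=> x_rest; have := x_rest; rewrite in_rest => /and3P [xu xw xW].
by apply: (h3 u x w); rewrite // 1?eq_sym // (hc x w) (matching_edge_twin x_rest).
Qed.

Lemma in_class j x : (x \in class j) = (x \in rest) && (c u x == j).
Proof. by rewrite inE. Qed.

Lemma card_class j : #|class j| <= 2.
Proof.
rewrite leqNgt; apply/negP => /card_gt2P [x1 [x2 [x3 [[]]]]].
rewrite !in_class => /andP [r1 /eqP c1] /andP [r2 /eqP c2] /andP [r3 /eqP c3].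
move=> [x12 x23 x31]; move: (r1) (r2) (r3); rewrite !in_rest.
move=> /and3P [x1u x1w x1W] /and3P [x2u x2w x2W] /and3P [x3u x3w x3W].
apply: (h5 x1 u x2 w x3 j) => //; first by solve_uniq.
- by rewrite -c1 matching_edge_colour_in.
- by rewrite hc.
- by rewrite hc -(matching_edge_twin r2).
- by rewrite -(matching_edge_twin r3).
Qed.

Lemma class_closed j x y : x \in class j -> 1 < #|class j| ->
  y \in rest -> y != x -> c x y = j -> y \in class j.
Proof.
move=> x_cl cl_gt1 y_rest yx cxy; apply/negPn/negP => y_ncl.
have /card_gt0P [x' /setD1P [x'x x'_cl]] : 0 < #|class j :\ x|.
  by move: cl_gt1; rewrite (cardsD1 x) x_cl.
have yx' : y != x' by apply: contraNneq y_ncl => ->.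
move: (x_cl) (x'_cl); rewrite !in_class.
move=> /andP [x_rest /eqP cux] /andP [x'_rest /eqP cux'].
move: (x_rest) (x'_rest) (y_rest); rewrite !in_rest.
move=> /and3P [xu xw xW] /and3P [x'u x'w x'W] /and3P [yu yw yW].
apply: (h5 y x u x' w j) => //; first by solve_uniq.
- by rewrite -cux matching_edge_colour_in.
- by rewrite hc.
- by rewrite hc.
- by rewrite hc -(matching_edge_twin x'_rest).
Qed.

Lemma rest_P3_colours : mono_P3_colours_in rest (S :\: pairs).
Proof.
move=> a b d a_rest b_rest d_rest ab bd ad cabd.
move: (a_rest) (b_rest) (d_rest); rewrite !in_rest.
move=> /and3P [au aw aW] /and3P [bu bw bW] /and3P [du dw dW].
have jS : c a b \in S by apply: (h3 a b d).
rewrite !inE jS andbT /=; set j := c a b in cabd jS *; apply/eqP => cl2.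
have cl_gt1 : 1 < #|class j| by rewrite cl2.
have [b_cl | b_ncl] := boolP (b \in class j).
  have a_cl : a \in class j by apply: (class_closed b_cl); rewrite // hc.
  have d_cl : d \in class j by apply: (class_closed b_cl); rewrite // eq_sym.
  suff : 2 < #|class j| by rewrite cl2.
  by apply/card_gt2P; exists a, b, d; rewrite (eq_sym d).
have a_ncl : a \notin class j.
  by apply: contra b_ncl => a_cl; apply: (class_closed a_cl); rewrite // eq_sym.
have d_ncl : d \notin class j.
  by apply: contra b_ncl => d_cl; apply: (class_closed d_cl); rewrite // hc.
have not_j x : x \in rest -> x \notin class j -> c u x != j.
  by move=> x_rest; apply: contraNneq => cux; rewrite in_class x_rest cux eqxx.
have cuab : c u a = c u b.
  rewrite hc (hc u b); apply: (rainbow_free_eq hR) => //; rewrite ?(eq_sym u) //.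
    by rewrite (hc a u) eq_sym not_j.
  by rewrite (hc b u) eq_sym not_j.
have cubd : c u b = c u d.
  rewrite hc (hc u d); apply: (rainbow_free_eq hR) => //; rewrite ?(eq_sym u) //.
    by rewrite -cabd (hc b u) eq_sym not_j.
  by rewrite -cabd (hc d u) eq_sym not_j.
suff : 2 < #|class (c u b)| by rewrite ltnNge card_class.
apply/card_gt2P; exists a, b, d.
by rewrite !in_class a_rest b_rest d_rest cuab -cubd eqxx (eq_sym d).
Qed.

Lemma card_rest : #|rest| <= #|S| + #|pairs|.
Proof.
have -> : #|rest| = \sum_(j in S) #|class j|.
  rewrite -sum1_card (partition_big (c u) (mem S)) /=.
    by apply: eq_bigr => j _; rewrite -sum1_card; apply: eq_bigl => x; rewrite in_class.
  exact: matching_edge_colour_in.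
apply: (@leq_trans (\sum_(j in S) (1 + (#|class j| == 2)))).
  by apply: leq_sum => j _; have := card_class j; case: #|_| => [|[|[|]]].
rewrite big_split /= sum1_card leq_add2l -sum1_card.
rewrite (eq_bigr (fun j => if #|class j| == 2 then 1 else 0)) // -big_mkcondr.
by apply: eq_leq; apply: eq_bigl => j; rewrite inE.
Qed.

Lemma matching_edge_contra : False.
Proof.
have uwW : [set u; w] \subset W by apply/subsetP => x; rewrite !inE => /orP [] /eqP ->.
have card_W : #|W| = #|rest| + 2.
  by rewrite -(cardsID [set u; w] W) (setIidPr uwW) cards2 uw addnC.
have pairsS : pairs \subset S by apply/subsetP => j; rewrite inE => /andP [].
have card_S : #|S| = #|S :\: pairs| + #|pairs|.
  by rewrite -(cardsID pairs S) (setIidPr pairsS) addnC.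
suff : #|rest| <= #|S :\: pairs| + 3 by have := card_rest; lia.
apply: (W_min rest (S :\: pairs)); [exact: subsetDl | exact: subsetDl | lia |].
exact: rest_P3_colours.
Qed.

End MatchingEdge.

Section ProperModule.
Local Unset Implicit Arguments.
Variable M : {set 'I_n}.
Hypotheses (MW : M \proper W) (M_gt2 : 2 < #|M|) (M_module : module W M).
Local Set Implicit Arguments.

Let out := W :\: M.

Lemma in_out y : (y \in out) = (y \notin M) && (y \in W).
Proof. by rewrite inE. Qed.

Lemma M_sub : {subset M <= W}.
Proof. by apply/subsetP; case/andP: MW. Qed.

Lemma module_colour_in y x : y \in out -> x \in M -> c y x \in S.
Proof.
rewrite in_out => /andP [yM yW] xM.
have /card_gt0P [x' /setD1P [x'x x'M]] : 0 < #|M :\ x|.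
  by move: M_gt2; rewrite (cardsD1 x) xM; case: #|_|.
have yx : y != x by apply: contraNneq yM => ->.
have yx' : y != x' by apply: contraNneq yM => ->.
rewrite hc; apply: (h3 x y x') => //; rewrite ?M_sub // 1?eq_sym //.
by rewrite hc (M_module y x x').
Qed.

Lemma module_colour_inj y1 y2 x : y1 \in out -> y2 \in out -> x \in M ->
  c y1 x = c y2 x -> y1 = y2.
Proof.
move=> y1_out y2_out xM cy12; apply/eqP/negPn/negP => y12.
have [x1 [x2 [x3 [[x1M x2M x3M] [x12 x23 x31]]]]] := card_gt2P M_gt2.
move: (y1_out) (y2_out); rewrite !in_out => /andP [y1M y1W] /andP [y2M y2W].
apply: (h5 x1 y1 x2 y2 x3 (c y1 x)) => //; rewrite ?M_sub //.
- by solve_uniq.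
- exact: module_colour_in.
- by rewrite hc (M_module y1 x1 x).
- exact: M_module.
- by rewrite hc cy12 (M_module y2 x2 x).
- by rewrite cy12 (M_module y2 x3 x).
Qed.

Lemma module_P3_colours x0 : 3 < #|M| -> x0 \in M ->
  mono_P3_colours_in M (S :\: [set c y x0 | y in out]).
Proof.
move=> M_gt3 x0M a b d aM bM dM ab bd ad cabd.
have jS : c a b \in S by apply: (h3 a b d); rewrite ?M_sub.
rewrite inE jS andbT; apply/imsetP => -[y y_out cab].
have [x xM] := @exists_fresh _ M [:: a; b; d] M_gt3.
rewrite !inE !negb_or => /and3P [xa xb xd].
move: (y_out); rewrite in_out => /andP [yM yW].
apply: (h5 a b d y x (c a b)) => //; rewrite ?M_sub //.
- by solve_uniq.
- by rewrite hc cab (M_module y d x0).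
- by rewrite cab (M_module y x x0).
Qed.

Lemma proper_module_contra : False.
Proof.
have [x0 x0M] : exists x0, x0 \in M by apply/card_gt0P; apply: leq_ltn_trans M_gt2.
set img := [set c y x0 | y in out].
have imgS : img \subset S.
  by apply/subsetP => _ /imsetP [y y_out ->]; apply: module_colour_in.
have card_img : #|img| = #|out|.
  by apply: card_in_imset => y1 y2 y1_out y2_out; apply: module_colour_inj.
have card_S : #|S| = #|S :\: img| + #|img|.
  by rewrite -(cardsID img S) (setIidPr imgS) addnC.
have card_W : #|W| = #|M| + #|out|.
  by rewrite -(cardsID M W) (setIidPr (proper_sub MW)).
have card_out : #|out| <= #|S| by rewrite -card_img subset_leq_card.
have M_lt := proper_card MW; have M_gt3 : 3 < #|M| by lia.
suff : #|M| <= #|S :\: img| + 3 by lia.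
apply: (W_min M (S :\: img)); [exact: proper_sub | exact: subsetDl | lia |].
exact: module_P3_colours.
Qed.

End ProperModule.

Section ConnectedClass.
Variable j : 'I_k.
Hypotheses (jS : j \in S) (conn : {in W &, forall x y, connect (mono_edge W j) x y}).

Local Notation e := (mono_edge W j).
Local Notation nbhd u := [set x | mono_edge W j u x].

Lemma W_gt4 : 4 < #|W|.
Proof.
have : 0 < #|S| by apply/card_gt0P; exists j.
lia.
Qed.

Lemma mono_edge_P5_contra p1 p2 p3 p4 p5 :
  e p1 p2 -> e p2 p3 -> e p3 p4 -> e p4 p5 -> uniq [:: p1; p2; p3; p4; p5] -> False.
Proof.
move=> /mono_edgeP [p1W p2W _ c12] /mono_edgeP [_ p3W _ c23].
move=> /mono_edgeP [_ p4W _ c34] /mono_edgeP [_ p5W _ c45] uniq_p.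
exact: (h5 p1 p2 p3 p4 p5 j).
Qed.

Lemma cut_edge (A : {pred 'I_n}) x y : x \in W -> y \in W -> x \in A -> y \notin A ->
  exists z z', [/\ z \in A, z' \notin A & e z z'].
Proof. by move=> xW yW; apply: connect_exit; apply: conn. Qed.

Lemma nbhd_gt2 u x1 x2 x3 : e u x1 -> e u x2 -> e u x3 ->
  x1 != x2 -> x2 != x3 -> x3 != x1 -> 2 < #|nbhd u|.
Proof. by move=> *; apply/card_gt2P; exists x1, x2, x3; rewrite !inE. Qed.

Lemma dominating_contra u : u \in W -> W :\ u \subset nbhd u -> False.
Proof.
move=> uW /subsetP dom.
have cu x : x \in W -> x != u -> c u x = j.
  move=> xW xu; have : x \in nbhd u by apply: dom; rewrite !inE xu xW.
  by rewrite inE => /mono_edgeP [].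
have card_W : #|W| = #|W :\ u| + 1 by rewrite (cardsD1 u W) uW addnC.
have card_S : #|S| = #|S :\ j| + 1 by rewrite (cardsD1 j S) jS addnC.
suff : #|W :\ u| <= #|S :\ j| + 3 by have := W_big; lia.
apply: (W_min (W :\ u) (S :\ j) (subsetDl _ _) (subsetDl _ _)); first by lia.
move=> a b d; rewrite !in_setD1 => /andP [au aW] /andP [bu bW] /andP [du dW].
move=> ab bd ad cabd.
rewrite (h3 a b d) // andbT; apply/eqP => cab.
have [x xW] := @exists_fresh _ W [:: a; b; d; u] W_gt4.
rewrite !inE !negb_or => /and4P [xa xb xd xu].
apply: (h5 a b d u x j) => //; first by solve_uniq.
- by rewrite -cabd.
- by rewrite hc cu.
- by rewrite cu // eq_sym.
Qed.

Lemma fan_contra u v b a1 a2 : e u v -> e v b -> b != u -> ~~ e u b ->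
  e u a1 -> e u a2 -> a1 != v -> a2 != v -> a1 != a2 -> False.
Proof.
move=> euv evb bu eub eua1 eua2 a1v a2v a12.
have [uW vW uv _] := mono_edgeP _ _ _ _ euv; have [_ bW vb cvb] := mono_edgeP _ _ _ _ evb.
have cub : c u b != j.
  by move: eub; apply: contraNN => /eqP cub; apply/mono_edgeP; rewrite eq_sym.
have off_j x y : e u x -> e u y -> x != v -> y != v -> x != y -> c v x != j /\ c x b != j.
  move=> eux euy xv yv xy.
  have [_ xW ux _] := mono_edgeP _ _ _ _ eux; have [_ yW uy _] := mono_edgeP _ _ _ _ euy.
  split; apply/eqP => cj.
  - apply: (@mono_edge_P5_contra b v x u y) => //.
    + by rewrite mono_edge_sym.
    + by apply/mono_edgeP; rewrite eq_sym.
    + by rewrite mono_edge_sym.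
    + by solve_uniq.
  - apply: (@mono_edge_P5_contra v b x u y) => //.
    + apply/mono_edgeP; split=> //; last by rewrite hc.
      by apply: contraNneq eub => ->.
    + by rewrite mono_edge_sym.
    + by solve_uniq.
have colour_through a : e u a -> a != v -> c v a != j -> c a b != j ->
    c u b = c a b /\ c v a = c a b.
  move=> /mono_edgeP [_ aW ua cua] av cva cab.
  have ba : b != a by apply: contraNneq eub => ->; apply/mono_edgeP.
  split; first by apply: (rainbow_free_eq hR); rewrite // ?cua // 1?eq_sym.
  rewrite (hc a b); apply: (rainbow_free_eq hR); rewrite // ?cvb // 1?eq_sym //.
  by rewrite hc.
have [c1v c1b] := off_j a1 a2 eua1 eua2 a1v a2v a12.
have a21 : a2 != a1 by rewrite eq_sym.
have [c2v c2b] := off_j a2 a1 eua2 eua1 a2v a1v a21.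
have [cu1 cv1] := colour_through a1 eua1 a1v c1v c1b.
have [cu2 cv2] := colour_through a2 eua2 a2v c2v c2b.
have [_ a1W ua1 _] := mono_edgeP _ _ _ _ eua1.
have [_ a2W ua2 _] := mono_edgeP _ _ _ _ eua2.
have ba1 : b != a1 by apply: contraNneq eub => ->.
apply: (h5 u b a1 v a2 (c u b)) => //.
- by solve_uniq.
- by apply: (h3 u b a1); rewrite // 1?eq_sym // (hc b a1) -cu1.
- by rewrite hc cu1.
- by rewrite hc cv1 cu1.
- by rewrite cv2 cu2.
Qed.

Lemma deg3_contra u w : 2 < #|nbhd u| -> w \in W -> w != u -> w \notin nbhd u -> False.
Proof.
move=> deg_u wW wu w_out.
have /card_gt0P [x0] : 0 < #|nbhd u| by apply: leq_ltn_trans deg_u.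
rewrite inE => /mono_edgeP [uW _ _ _].
have w_notin : w \notin u |: nbhd u by rewrite in_setU1 negb_or wu w_out.
have [v [b [v_in b_out evb]]] := cut_edge uW wW (setU11 u (nbhd u)) w_notin.
move: b_out; rewrite in_setU1 negb_or inE => /andP [bu eub].
have euv : e u v.
  by move: v_in; rewrite in_setU1 inE => /orP [/eqP vu | //]; move: eub; rewrite -vu evb.
have : 1 < #|nbhd u :\ v| by move: deg_u; rewrite (cardsD1 v) inE euv.
case/card_gt1P => a1 [a2 [/setD1P [a1v eua1] /setD1P [a2v eua2] a12]].
by rewrite !inE in eua1 eua2; apply: (fan_contra euv evb bu eub eua1 eua2).
Qed.

Section MaxDegree2.
Hypothesis deg2 : forall u, #|nbhd u| <= 2.

Lemma no_three_nbrs u x1 x2 x3 : e u x1 -> e u x2 -> e u x3 ->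
  x1 != x2 -> x2 != x3 -> x3 != x1 -> False.
Proof.
by move=> *; have := deg2 u; rewrite leqNgt (nbhd_gt2 (x1:=x1) (x2:=x2) (x3:=x3)).
Qed.

Lemma maxdeg2_P4_contra p1 p2 p3 p4 :
  e p1 p2 -> e p2 p3 -> e p3 p4 -> uniq [:: p1; p2; p3; p4] -> False.
Proof.
move=> e12 e23 e34 uniq_p.
have [p1W _ _ _] := mono_edgeP _ _ _ _ e12.
have [x xW x_out] := @exists_fresh _ W [:: p1; p2; p3; p4] W_gt4.
have [z [z' [z_in z'_out ezz']]] := cut_edge p1W xW (mem_head p1 _) x_out.
move: uniq_p z'_out; rewrite /= !inE !negb_or !andbT -!andbA.
move=> /and3P [p12 p13 /and3P [p14 p23 /andP [p24 p34]]] /and4P [z1 z2 z3 z4].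
move: z_in; rewrite !inE => /or4P [] /eqP z_eq; rewrite {z}z_eq in ezz'.
- apply: (mono_edge_P5_contra (p1:=z') _ e12 e23 e34); last by solve_uniq.
  by rewrite mono_edge_sym.
- apply: (no_three_nbrs (u:=p2) (x1:=p1) (x2:=p3) (x3:=z')) => //.
  + by rewrite mono_edge_sym.
  + by rewrite eq_sym.
- apply: (no_three_nbrs (u:=p3) (x1:=p2) (x2:=p4) (x3:=z')) => //.
  + by rewrite mono_edge_sym.
  + by rewrite eq_sym.
- by apply: (mono_edge_P5_contra e12 e23 e34 ezz'); solve_uniq.
Qed.

Lemma maxdeg2_P3_contra a b d : e a b -> e b d -> a != d -> False.
Proof.
move=> eab ebd ad.
have [aW bW ab _] := mono_edgeP _ _ _ _ eab; have [_ dW bd _] := mono_edgeP _ _ _ _ ebd.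
have [x xW x_out] := @exists_fresh _ W [:: a; b; d] (ltnW W_gt4).
have [z [z' [z_in z'_out ezz']]] := cut_edge aW xW (mem_head a _) x_out.
move: z'_out; rewrite !inE !negb_or => /and3P [z'a z'b z'd].
move: z_in; rewrite !inE => /or3P [] /eqP z_eq; rewrite {z}z_eq in ezz'.
- apply: (maxdeg2_P4_contra (p1:=z') _ eab ebd); last by solve_uniq.
  by rewrite mono_edge_sym.
- apply: (no_three_nbrs (u:=b) (x1:=a) (x2:=d) (x3:=z')) => //.
  + by rewrite mono_edge_sym.
  + by rewrite eq_sym.
- by apply: (maxdeg2_P4_contra eab ebd ezz'); solve_uniq.
Qed.

End MaxDegree2.

Lemma connected_class_contra a b d : e a b -> e b d -> a != d -> False.
Proof.
move=> eab ebd ad.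
have [/exists_inP [u uW dom] | not_dom] := boolP [exists u in W, W :\ u \subset nbhd u].
  exact: dominating_contra uW dom.
have [/existsP [u deg_u] | deg2] := boolP [exists u, 2 < #|nbhd u|].
  have /card_gt0P [x] : 0 < #|nbhd u| by apply: leq_ltn_trans deg_u.
  rewrite inE => /mono_edgeP [uW _ _ _].
  have /subsetPn [w /setD1P [wu wW] w_out] : ~~ (W :\ u \subset nbhd u).
    by apply: contraNN not_dom => dom; apply/exists_inP; exists u.
  exact: deg3_contra deg_u wW wu w_out.
apply: (maxdeg2_P3_contra _ eab ebd ad) => u; rewrite leqNgt.
by apply: contraNN deg2 => deg_u; apply/existsP; exists u.
Qed.

End ConnectedClass.

Lemma mono_P3_contra a b d : a \in W -> b \in W -> d \in W ->
  a != b -> b != d -> a != d -> c a b = c b d -> False.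
Proof.
move=> aW bW dW ab bd ad cabd.
have jS := h3 a b d aW bW dW ab bd ad cabd; set j := c a b in cabd jS.
set K := [set x | connect (mono_edge W j) b x].
have eab : mono_edge W j a b by apply/mono_edgeP.
have ebd : mono_edge W j b d by apply/mono_edgeP; rewrite -cabd.
have KW : K \subset W by apply/subsetP => x; rewrite inE; apply: connect_mono_edge_in.
have [K_proper | ] := boolP (K \proper W).
  apply: (proper_module_contra K_proper); last exact: component_module.
  apply/card_gt2P; exists a, b, d; rewrite !inE connect0 (eq_sym d).
  by rewrite !connect1 // mono_edge_sym.
rewrite properE KW /= negbK => /subsetP WK.
have conn : {in W &, forall x y, connect (mono_edge W j) x y}.
  move=> x y /WK + /WK; rewrite !inE => bx b_y.
  by apply: connect_trans b_y; rewrite (sym_connect_sym (mono_edge_sym W j)).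
exact: (connected_class_contra jS conn eab ebd ad).
Qed.

Lemma minimal_counterexample_contra : False.
Proof.
have /card_gt1P [u [w [uW wW uw]]] : 1 < #|W| by move: W_big; lia.
have S_gt0 : 0 < #|S|.
  apply/card_gt0P; exists (c u w); apply/negPn/negP.
  exact: matching_edge_contra uW wW uw.
have : #|W| <= #|@set0 'I_k| + 3.
  apply: (W_min W set0 (subxx W) (sub0set S)); first by rewrite cards0 ltn_add2l.
  move=> a b d aW bW dW ab bd ad cabd; exfalso.
  exact: (mono_P3_contra aW bW dW ab bd ad cabd).
by rewrite cards0; move: W_big; lia.
Qed.

End MinimalCounterexample.

Lemma card_le_colours (W : {set 'I_n}) (S : {set 'I_k}) :
  rainbow_free W -> no_mono_P5 W S -> mono_P3_colours_in W S -> #|W| <= #|S| + 3.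
Proof.
have [m] := ubnP (#|W| + #|S|); elim: m W S => // m IHm W S lt_m hR h5 h3.
rewrite leqNgt; apply/negP => W_big; have {}W_big : #|S| + 4 <= #|W| by lia.
apply: (minimal_counterexample_contra hR h5 h3 W_big) => W' S' W'W S'S lt_sum h3'.
apply: IHm => //; first by lia.
  exact: rainbow_free_sub W'W hR.
exact: no_mono_P5_sub W'W S'S h5.
Qed.

Lemma rainbow_free_setT : ~ has_rainbow_triangle c -> rainbow_free setT.
Proof.
move=> no_rainbow x y z _ _ _ xy yz xz; apply/negPn/negP; rewrite !negb_or => /and3P rb.
by apply: no_rainbow; exists x, y, z.
Qed.

Lemma no_mono_P5_setT (S : {set 'I_k}) :
  (forall j, j \in S -> ~ has_mono_path c 5 j) -> no_mono_P5 setT S.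
Proof.
move=> no_P5 p1 p2 p3 p4 p5 j _ _ _ _ _ uniq_p /no_P5 no_P5j c12 c23 c34 c45.
apply: no_P5j; apply: (has_mono_path_seq (s := [:: p1; p2; p3; p4; p5]) (x0 := p1)) => //.
by case=> [|[|[|[|]]]].
Qed.

Lemma mono_P3_colours_setT (S : {set 'I_k}) :
  (forall j, j \notin S -> ~ has_mono_path c 3 j) -> mono_P3_colours_in setT S.
Proof.
move=> no_P3 a b d _ _ _ ab bd ad cabd; apply/negPn/negP => /no_P3; apply.
apply: (has_mono_path_seq (s := [:: a; b; d]) (x0 := a)); last by case=> [|[|]].
by rewrite /= !inE negb_or ab ad bd.
Qed.

End Colouring.

Lemma card_ord_lt k t : #|[set j : 'I_k | val j < t]| <= t.
Proof.
rewrite cardE -(size_map val) -[leqRHS](size_iota 0); apply: uniq_leq_size.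
  by rewrite map_inj_uniq ?enum_uniq //; apply: val_inj.
by move=> i /mapP [j]; rewrite mem_enum inE mem_iota => jt ->.
Qed.

Theorem lemma1 (k t : nat) (hk : 2 <= k) (ht : t <= k) (n : nat) (hn : t + 4 <= n)
  (c : 'I_n -> 'I_n -> 'I_k) (hc : edge_coloring c) :
  has_rainbow_triangle c \/
  (exists j : 'I_k, val j < t /\ has_mono_path c 5 j) \/
  (exists j : 'I_k, t <= val j /\ has_mono_path c 3 j).
Proof.
have [rainbow | no_rainbow] := classic (has_rainbow_triangle c); first by left.
have [P5 | no_P5] := classic (exists j : 'I_k, val j < t /\ has_mono_path c 5 j).
  by right; left.
right; right; apply: NNPP => no_P3.
set S := [set j : 'I_k | val j < t].
have S_P5 : no_mono_P5 c setT S.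
  by apply: no_mono_P5_setT => j; rewrite inE => jt P5j; apply: no_P5; exists j.
have S_P3 : mono_P3_colours_in c setT S.
  apply: mono_P3_colours_setT => j; rewrite inE -leqNgt => tj P3j.
  by apply: no_P3; exists j.
have := card_le_colours hc (rainbow_free_setT no_rainbow) S_P5 S_P3.
move=> /leq_trans/(_ (leq_add (card_ord_lt k t) (leqnn 3))).
by rewrite cardsT card_ord; lia.
Qed.
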